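(* Let $\mathbb F$ be algebraically closed with $\operatorname{char}\mathbb F\neq 2$. For any $a,b,c\in\mathbb F$ and $d\in\mathbb N$ there exists a $(d+1)$-dimensional $\Re$-module with an $\mathbb F$-basis $v_0,\dots,v_d$ such that $Av_i=\theta_iv_i+v_{i+1}$ (with $v_{d+1}=0$) and $Bv_i=\theta_i^*v_i+\varphi_iv_{i-1}$ (with $v_{-1}=0$) for $0\le i\le d$, and on which $\alpha,\beta,\delta$ act as scalar multiplication by $(c-b)(c+b+1)(a-\tfrac d2)(a+\tfrac d2+1)$, $(a-c)(a+c+1)(b-\tfrac d2)(b+\tfrac d2+1)$, and $\tfrac d2(\tfrac d2+1)+a(a+1)+b(b+1)+c(c+1)$, respectively.
   Context: The Racah algebra $\Re$ is the unital associative $\mathbb F$-algebra with generators $A,B,C,D$ and relations $[A,B]=[B,C]=[C,A]=2D$ together with the requirement that each of $\alpha:=[A,D]+AC-BA$, $\beta:=[B,D]+BA-CB$, $\gamma:=[C,D]+CB-AC$ is central in $\Re$; $\delta:=A+B+C$. Here $\theta_i=(a+\tfrac d2-i)(a+\tfrac d2-i+1)$, $\theta_i^*=(b+\tfrac d2-i)(b+\tfrac d2-i+1)$, $\varphi_i=i(i-d-1)(a+b+c+\tfrac d2-i+2)(a+b-c+\tfrac d2-i+1)$. *)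

From HB Require Import structures.
From mathcomp Require Import all_boot all_order all_algebra.
Set Implicit Arguments. Unset Strict Implicit. Unset Printing Implicit Defensive.
Import GRing.Theory.
Local Open Scope ring_scope.

Definition comm_mx_op {F : fieldType} {n : nat} (X Y : 'M[F]_n) : 'M[F]_n :=
  X *m Y - Y *m X.

(* An R-module structure on F^n (column vectors) is given by the images
   A, B, C, D of the generators, satisfying the defining relations of the
   Racah algebra: [A,B]=[B,C]=[C,A]=2D and alpha, beta, gamma commute with
   all generators (hence with the whole image of the algebra). *)
Definition racah_alpha {F : fieldType} {n : nat} (A B C D : 'M[F]_n) :=
  comm_mx_op A D + A *m C - B *m A.
Definition racah_beta {F : fieldType} {n : nat} (A B C D : 'M[F]_n) :=
  comm_mx_op B D + B *m A - C *m B.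
Definition racah_gamma {F : fieldType} {n : nat} (A B C D : 'M[F]_n) :=
  comm_mx_op C D + C *m B - A *m C.
Definition racah_delta {F : fieldType} {n : nat} (A B C D : 'M[F]_n) :=
  A + B + C.

Definition commutes_with_gens {F : fieldType} {n : nat} (X A B C D : 'M[F]_n) :=
  [/\ comm_mx_op X A = 0, comm_mx_op X B = 0, comm_mx_op X C = 0
    & comm_mx_op X D = 0].

Definition is_racah_module {F : fieldType} {n : nat} (A B C D : 'M[F]_n) : Prop :=
  [/\ comm_mx_op A B = 2%:R *: D, comm_mx_op B C = 2%:R *: D
    & comm_mx_op C A = 2%:R *: D]
  /\ [/\ commutes_with_gens (racah_alpha A B C D) A B C D,
      commutes_with_gens (racah_beta A B C D) A B C D
    & commutes_with_gens (racah_gamma A B C D) A B C D].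

(* Basis vector v_i of F^(d+1) (standard basis), with v_i = 0 for i > d. *)
Definition bvec {F : fieldType} (n i : nat) : 'cV[F]_n :=
  \col_(j < n) (if (j : nat) == i then 1 else 0).

Definition bvec_pred {F : fieldType} (n i : nat) : 'cV[F]_n :=
  if i is k.+1 then bvec n k else 0.

Definition half_d {F : fieldType} (d : nat) : F := d%:R / 2%:R.

Definition theta {F : fieldType} (a : F) (d i : nat) : F :=
  (a + half_d d - i%:R) * (a + half_d d - i%:R + 1).
Definition theta_s {F : fieldType} (b : F) (d i : nat) : F :=
  (b + half_d d - i%:R) * (b + half_d d - i%:R + 1).
Definition phi {F : fieldType} (a b c : F) (d i : nat) : F :=
  i%:R * (i%:R - d%:R - 1) * (a + b + c + half_d d - i%:R + 2%:R)
    * (a + b - c + half_d d - i%:R + 1).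

From HB Require Import structures.
From mathcomp Require Import all_boot all_order all_algebra.
From mathcomp Require Import zify ring.
Set Implicit Arguments. Unset Strict Implicit. Unset Printing Implicit Defensive.
Import GRing.Theory.
Local Open Scope ring_scope.

(* Take A lower and B upper bidiagonal as prescribed, and put C := delta - A - B
   and D := [A, B] / 2.  Then [A, B] = [B, C] = [C, A] = 2D and the value of
   delta hold by construction, and alpha + beta + gamma = [delta, D] = 0, so it
   only remains to see that alpha and beta are scalar.  Applied to the basis
   vector v_i, each of them is a combination of v_(i-2), ..., v_(i+2); since
   theta_i, theta*_i and phi_i are polynomials in i, the vanishing of all
   coefficients but that of v_i is a polynomial identity in i. *)

Section RacahModuleOfPair.
Variables (F : fieldType) (n : nat).
Implicit Types (s x y : F) (A B C D : 'M[F]_n).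

Definition racah_C_of s A B : 'M[F]_n := s%:M - A - B.
Definition racah_D_of A B : 'M[F]_n := 2%:R^-1 *: comm_mx_op A B.

Lemma racah_alpha_beta_gamma_sum A B C D :
  racah_alpha A B C D + racah_beta A B C D + racah_gamma A B C D
  = comm_mx_op (racah_delta A B C D) D.
Proof.
apply/matrixP => i j.
rewrite /racah_alpha /racah_beta /racah_gamma /racah_delta /comm_mx_op.
rewrite !mulmxDl !mulmxDr !mxE; ring.
Qed.

Lemma comm_mx_op_scalar s A : comm_mx_op s%:M A = 0.
Proof. by rewrite /comm_mx_op mul_scalar_mx mul_mx_scalar subrr. Qed.

Lemma scalar_commutes_with_gens s A B C D : commutes_with_gens s%:M A B C D.
Proof. by split; rewrite comm_mx_op_scalar. Qed.

Lemma comm_mx_op_C_ofl s A B : comm_mx_op B (racah_C_of s A B) = comm_mx_op A B.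
Proof.
apply/matrixP => i j; rewrite /comm_mx_op /racah_C_of.
rewrite !mulmxBl !mulmxBr mul_scalar_mx mul_mx_scalar !mxE; ring.
Qed.

Lemma comm_mx_op_C_ofr s A B : comm_mx_op (racah_C_of s A B) A = comm_mx_op A B.
Proof.
apply/matrixP => i j; rewrite /comm_mx_op /racah_C_of.
rewrite !mulmxBl !mulmxBr mul_scalar_mx mul_mx_scalar !mxE; ring.
Qed.

Lemma racah_delta_of_pair s A B :
  racah_delta A B (racah_C_of s A B) (racah_D_of A B) = s%:M.
Proof. by apply/matrixP => i j; rewrite /racah_delta /racah_C_of !mxE; ring. Qed.

Hypothesis char_neq2 : (2%:R : F) != 0.

Lemma racah_module_of_pair s A B x y :
  racah_alpha A B (racah_C_of s A B) (racah_D_of A B) = x%:M ->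
  racah_beta A B (racah_C_of s A B) (racah_D_of A B) = y%:M ->
  is_racah_module A B (racah_C_of s A B) (racah_D_of A B).
Proof.
set C := racah_C_of s A B; set D := racah_D_of A B => alphaE betaE.
have twoD : 2%:R *: D = comm_mx_op A B by rewrite scalerA mulfV // scale1r.
have gammaE : racah_gamma A B C D = (- (x + y))%:M.
  have := racah_alpha_beta_gamma_sum A B C D.
  rewrite racah_delta_of_pair alphaE betaE comm_mx_op_scalar => /eqP.
  by rewrite addrC addr_eq0 => /eqP ->; rewrite -raddfD -raddfN.
split; split.
- by rewrite twoD.
- by rewrite comm_mx_op_C_ofl twoD.
- by rewrite comm_mx_op_C_ofr twoD.
- by rewrite alphaE; apply: scalar_commutes_with_gens.
- by rewrite betaE; apply: scalar_commutes_with_gens.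
- by rewrite gammaE; apply: scalar_commutes_with_gens.
Qed.

End RacahModuleOfPair.

Section StandardBasis.
Variables (F : fieldType) (d : nat).

Lemma mulmx_bvec (M : 'M[F]_d.+1) i r :
  (M *m bvec d.+1 i) r 0 = if (i <= d)%N then M r (inord i) else 0.
Proof.
rewrite mxE; case: leqP => [le_id | lt_di].
  rewrite (bigD1 (inord i)) //= big1 ?addr0 => [|j neq_ji].
    by rewrite mxE inordK // eqxx mulr1.
  rewrite mxE ifF ?mulr0 //; apply: contraNF neq_ji => /eqP <-.
  by rewrite inord_val.
apply: big1 => j _; rewrite mxE ifF ?mulr0 //.
by apply/negbTE/eqP => eq_ji; move: (ltn_ord j); lia.
Qed.

Lemma bvec_matrixP (X Y : 'M[F]_d.+1) :
  (forall i, X *m bvec d.+1 i = Y *m bvec d.+1 i) -> X = Y.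
Proof.
move=> eqXY; apply/matrixP => r s.
have := congr1 (fun v : 'cV[F]_d.+1 => v r 0) (eqXY s).
by rewrite !mulmx_bvec -ltnS ltn_ord inord_val.
Qed.

Lemma bvec_pred0 : bvec_pred d.+1 0 = 0 :> 'cV[F]_d.+1. Proof. by []. Qed.

Lemma bvec_predS k : bvec_pred d.+1 k.+1 = bvec d.+1 k :> 'cV[F]_d.+1.
Proof. by []. Qed.

End StandardBasis.

Section RacahPair.
Variables (F : fieldType) (a b c : F) (d : nat).

Definition racah_A : 'M[F]_d.+1 :=
  \matrix_(r, s) (if (r : nat) == s then theta a d s
                  else if (r : nat) == s.+1 then 1 else 0).

Definition racah_B : 'M[F]_d.+1 :=
  \matrix_(r, s) (if (r : nat) == s then theta_s b d s
                  else if (r : nat).+1 == s then phi a b c d s else 0).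

Definition racah_delta0 : F :=
  half_d d * (half_d d + 1) + a * (a + 1) + b * (b + 1) + c * (c + 1).

Local Notation C := (racah_C_of racah_delta0 racah_A racah_B).
Local Notation D := (racah_D_of racah_A racah_B).

Ltac case_nat_eqs :=
  repeat match goal with |- context [(?x == ?y)%N] => case: (@eqP nat x y) => ? end.

Lemma racah_A_bvec i :
  racah_A *m bvec d.+1 i = theta a d i *: bvec d.+1 i + bvec d.+1 i.+1.
Proof.
apply/matrixP => r s; rewrite ord1 mulmx_bvec /bvec !mxE.
move: (nat_of_ord r) (ltn_ord r) => m lt_md.
case: leqP => le_id; rewrite ?inordK //; case_nat_eqs; subst; try lia;
  by rewrite ?mulr1 ?mulr0 ?addr0 ?add0r.
Qed.

(* phi vanishes at i = d + 1, so the formula also holds beyond the basis. *)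
Lemma racah_B_bvec i :
  racah_B *m bvec d.+1 i = theta_s b d i *: bvec d.+1 i
                           + phi a b c d i *: bvec_pred d.+1 i.
Proof.
apply/matrixP => r s; rewrite ord1 mulmx_bvec.
case: i => [|i]; rewrite /bvec_pred /bvec !mxE;
  move: (nat_of_ord r) (ltn_ord r) => m lt_md.
  rewrite leq0n inordK //; case_nat_eqs; subst; try lia;
  by rewrite ?mulr1 ?mulr0 ?addr0 ?add0r.
case: leqP => le_id; rewrite ?inordK //; case_nat_eqs; subst; try lia;
  rewrite ?mulr1 ?mulr0 ?addr0 ?add0r //.
have -> : i = d by lia.
rewrite /phi; ring.
Qed.

Ltac expand_products :=
  repeat first [rewrite !mulmxDl | rewrite !mulmxBl | rewrite !mulNmx
  | rewrite -!scalemxAl | rewrite !mul_scalar_mx | rewrite !mul_mx_scalar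
  | rewrite !mulmxDr | rewrite !mulmxBr | rewrite !mulmxN | rewrite -!scalemxAr];
  rewrite -?mulmxA.

Ltac apply_on_bvec :=
  repeat first [rewrite !racah_A_bvec | rewrite !racah_B_bvec | rewrite !mulmxDr
  | rewrite -!scalemxAr | rewrite !bvec_predS | rewrite !bvec_pred0
  | rewrite !scaler0 | rewrite !mulmx0].

Ltac compare_coordinates hd :=
  apply/matrixP => ? ?; rewrite /bvec !mxE;
  match goal with |- context [nat_of_ord ?r] => move: (nat_of_ord r) => ? end;
  case_nat_eqs; subst; try lia;
  rewrite /theta /theta_s /phi /racah_delta0 hd.

Hypothesis char_neq2 : (2%:R : F) != 0.

(* Leaves half_d d as the only atom coming from d, for [field]. *)
Let d_half : (d%:R : F) = half_d d + half_d d.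
Proof. by rewrite /half_d; field. Qed.

Lemma racah_alpha_pair :
  racah_alpha racah_A racah_B C D =
    ((c - b) * (c + b + 1) * (a - half_d d) * (a + half_d d + 1))%:M.
Proof.
apply: bvec_matrixP => i.
rewrite /racah_alpha /comm_mx_op /racah_C_of /racah_D_of; expand_products.
case: i => [|i]; apply_on_bvec; compare_coordinates d_half;
  field; exact: char_neq2.
Qed.

Lemma racah_beta_pair :
  racah_beta racah_A racah_B C D =
    ((a - c) * (a + c + 1) * (b - half_d d) * (b + half_d d + 1))%:M.
Proof.
apply: bvec_matrixP => i.
rewrite /racah_beta /comm_mx_op /racah_C_of /racah_D_of; expand_products.
case: i => [|[|i]]; apply_on_bvec; compare_coordinates d_half;
  field; exact: char_neq2.
Qed.

End RacahPair.

Theorem proposition2p4 (F : closedFieldType) (hchar : (2%:R : F) != 0)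
    (a b c : F) (d : nat) :
  exists A B C D : 'M[F]_d.+1,
    is_racah_module A B C D /\
    [/\ (forall i : nat, (i <= d)%N ->
           A *m bvec d.+1 i = theta a d i *: bvec d.+1 i + bvec d.+1 i.+1),
        (forall i : nat, (i <= d)%N ->
           B *m bvec d.+1 i = theta_s b d i *: bvec d.+1 i
                              + phi a b c d i *: bvec_pred d.+1 i),
        racah_alpha A B C D =
          ((c - b) * (c + b + 1) * (a - half_d d) * (a + half_d d + 1))%:M,
        racah_beta A B C D =
          ((a - c) * (a + c + 1) * (b - half_d d) * (b + half_d d + 1))%:M
      & racah_delta A B C D =
          (half_d d * (half_d d + 1) + a * (a + 1) + b * (b + 1)
             + c * (c + 1))%:M].
Proof.
have alphaE := racah_alpha_pair a b c d hchar.
have betaE := racah_beta_pair a b c d hchar.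
exists (racah_A a d), (racah_B a b c d),
  (racah_C_of (racah_delta0 a b c d) (racah_A a d) (racah_B a b c d)),
  (racah_D_of (racah_A a d) (racah_B a b c d)).
split; first exact: (racah_module_of_pair hchar alphaE betaE).
split=> //.
- by move=> i _; apply: racah_A_bvec.
- by move=> i _; apply: racah_B_bvec.
- exact: racah_delta_of_pair.
Qed.
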